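(* Let $N,d\ge1$, $\lambda,\tau>0$ with $\lambda\tau\le\frac12$, and let $\psi:[0,\infty)\to(0,\infty)$ be positive, nonincreasing, differentiable with $\psi(r)\le1$ for all $r\ge0$. Let $(x_i,v_i)_{i=1}^N$ solve $$\dot x_i(t)=v_i(t),\qquad \dot v_i(t)=\frac{\lambda}{N}\sum_{j=1}^N\psi(|x_i(t-\tau)-x_j(t-\tau)|)\,(v_j(t-\tau)-v_i(t-\tau)),\qquad t>0,$$ with initial data $(x_i,v_i)=(x_i^0,v_i^0)$ on $[-\tau,0]$, $(x_i^0,v_i^0)\in C([-\tau,0];\mathbb{R}^{2d})\cap C^1((-\tau,0);\mathbb{R}^{2d})$. Define for $t\ge\tau$ $$\mathcal L(t):=V(t)+4\tau\lambda^3\int_{t-\tau}^t\int_\theta^t\widetilde D(s)\,ds\,d\theta.$$ Then $\mathcal L(t)\le\mathcal L(\tau)$ for all $t\ge\tau$.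
   Context: $V(t):=\frac12\sum_{i,j=1}^N|v_i(t)-v_j(t)|^2$, $D(t):=\frac12\sum_{i,j=1}^N\psi(|x_i(t)-x_j(t)|)\,|v_j(t)-v_i(t)|^2$, and $\widetilde D(t):=D(t-\tau)$. *)

From Stdlib Require Import Reals List.
From Coquelicot Require Import Coquelicot.
Open Scope R_scope.

Definition sumN (n : nat) (f : nat -> R) : R :=
  fold_right Rplus 0 (map f (seq 0 n)).

(* a configuration: particle index i < N, coordinate k < d, time t *)
Definition traj := nat -> nat -> R -> R.

Definition dist2 (d : nat) (y : traj) (i j : nat) (t : R) : R :=
  sumN d (fun k => (y i k t - y j k t) ^ 2).

Definition edist (d : nat) (y : traj) (i j : nat) (t : R) : R :=
  sqrt (dist2 d y i j t).

Definition Vfun (N d : nat) (v : traj) (t : R) : R :=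
  / 2 * sumN N (fun i => sumN N (fun j => dist2 d v i j t)).

Definition Dfun (N d : nat) (psi : R -> R) (x v : traj) (t : R) : R :=
  / 2 * sumN N (fun i => sumN N (fun j =>
          psi (edist d x i j t) * dist2 d v j i t)).

Definition Lfun (N d : nat) (lam tau : R) (psi : R -> R) (x v : traj) (t : R) : R :=
  Vfun N d v t + 4 * tau * lam ^ 3 *
    RInt (fun theta => RInt (fun s => Dfun N d psi x v (s - tau)) theta t) (t - tau) t.

(* f : R -> R is differentiable on [0, +oo): two-sided derivative at r > 0,
   right derivative at r = 0 *)
Definition differentiable_on_nonneg (f : R -> R) : Prop :=
  forall r, 0 <= r -> exists l : R,
    filterlim (fun h => (f (r + h) - f r) / h)
      (within (fun h => h <> 0 /\ 0 <= r + h) (locally 0)) (locally l).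

Definition continuous_on_from (a : R) (f : R -> R) : Prop :=
  forall t, a <= t -> filterlim f (within (fun s => a <= s) (locally t)) (locally (f t)).

Definition continuous_on_cc (a b : R) (f : R -> R) : Prop :=
  forall t, a <= t <= b ->
    filterlim f (within (fun s => a <= s <= b) (locally t)) (locally (f t)).

Definition C1_on_oo (a b : R) (f : R -> R) : Prop :=
  (forall t, a < t < b -> ex_derive f t) /\
  (forall t, a < t < b -> continuous (Derive f) t).

From Stdlib Require Import Reals List Lra Lia.
From Coquelicot Require Import Coquelicot.
Open Scope R_scope.

(* Differentiating V along the delayed flow and using the symmetry of the weights
   psi_ij, the increments d_i = v_i(t) - v_i(t - tau) give
     V'(t) <= lam * sum_ij |d_i - d_j|^2 - 3/2 * lam * D(t - tau).
   Since d_i is the integral over [t - tau, t] of the delayed alignment force,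
   Cauchy-Schwarz bounds the first term by 4 tau lam^3 * int_{t-tau}^t D(s - tau) ds,
   which is exactly what the double-integral term of L compensates: its derivative is
   4 tau lam^3 * (tau D(t - tau) - int_{t-tau}^t D(s - tau) ds).  What remains,
   lam * D(t - tau) * (4 (lam tau)^2 - 3/2), is nonpositive when lam tau <= 1/2. *)

Lemma sumN_0 f : sumN 0 f = 0.
Proof. reflexivity. Qed.

Lemma sumN_S n f : sumN (S n) f = sumN n f + f n.
Proof.
  unfold sumN. rewrite seq_S, map_app, fold_right_app. simpl.
  induction (map f (seq 0 n)) as [|a l IH]; simpl; [ring | rewrite IH; ring].
Qed.

Lemma sumN_ext n f g : (forall i, (i < n)%nat -> f i = g i) -> sumN n f = sumN n g.
Proof.
  induction n as [|n IH]; intros H; [reflexivity|].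
  rewrite !sumN_S, IH, H; auto.
Qed.

Lemma sumN_le n f g : (forall i, (i < n)%nat -> f i <= g i) -> sumN n f <= sumN n g.
Proof.
  induction n as [|n IH]; intros H; [apply Rle_refl|].
  rewrite !sumN_S. apply Rplus_le_compat; auto.
Qed.

Lemma sumN_plus n f g : sumN n (fun i => f i + g i) = sumN n f + sumN n g.
Proof. induction n as [|n IH]; [rewrite !sumN_0; ring|]. rewrite !sumN_S, IH. ring. Qed.

Lemma sumN_minus n f g : sumN n (fun i => f i - g i) = sumN n f - sumN n g.
Proof. induction n as [|n IH]; [rewrite !sumN_0; ring|]. rewrite !sumN_S, IH. ring. Qed.

Lemma sumN_scal n c f : sumN n (fun i => c * f i) = c * sumN n f.
Proof. induction n as [|n IH]; [rewrite !sumN_0; ring|]. rewrite !sumN_S, IH. ring. Qed.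

Lemma sumN_scal_r n c f : sumN n (fun i => f i * c) = sumN n f * c.
Proof. induction n as [|n IH]; [rewrite !sumN_0; ring|]. rewrite !sumN_S, IH. ring. Qed.

Lemma sumN_const n c : sumN n (fun _ => c) = INR n * c.
Proof. induction n as [|n IH]; [rewrite sumN_0; simpl; ring|]. rewrite sumN_S, IH, S_INR. ring. Qed.

Lemma sumN_nonneg n f : (forall i, (i < n)%nat -> 0 <= f i) -> 0 <= sumN n f.
Proof. intros H. rewrite <- (Rmult_0_r (INR n)), <- sumN_const. now apply sumN_le. Qed.

Lemma sumN_swap n m (f : nat -> nat -> R) :
  sumN n (fun i => sumN m (fun j => f i j)) = sumN m (fun j => sumN n (fun i => f i j)).
Proof.
  induction n as [|n IH].
  - rewrite sumN_0, <- (Rmult_0_r (INR m)), <- sumN_const. reflexivity.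
  - rewrite sumN_S, IH, <- sumN_plus. apply sumN_ext. intros. now rewrite sumN_S.
Qed.

Lemma sumN_swap3 n m p (h : nat -> nat -> nat -> R) :
  sumN n (fun i => sumN m (fun j => sumN p (fun k => h i j k))) =
  sumN p (fun k => sumN n (fun i => sumN m (fun j => h i j k))).
Proof.
  rewrite (sumN_ext n _ (fun i => sumN p (fun k => sumN m (fun j => h i j k))))
    by (intros; apply sumN_swap).
  apply sumN_swap.
Qed.

Lemma sumN_symmetrize n (g : nat -> nat -> R) :
  sumN n (fun i => sumN n (fun j => g i j)) =
  / 2 * sumN n (fun i => sumN n (fun j => g i j + g j i)).
Proof.
  rewrite (sumN_ext n (fun i => sumN n (fun j => g i j + g j i))
             (fun i => sumN n (fun j => g i j) + sumN n (fun j => g j i)))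
    by (intros; apply sumN_plus).
  rewrite sumN_plus, (sumN_swap n n (fun j i => g i j)). field.
Qed.

Lemma sumN_mul_diff n (u f : nat -> R) :
  sumN n (fun i => sumN n (fun j => (u i - u j) * (f i - f j))) =
  2 * (INR n * sumN n (fun i => u i * f i) - sumN n u * sumN n f).
Proof.
  set (h i j := u i * f i - u i * f j).
  transitivity (2 * sumN n (fun i => sumN n (fun j => h i j))).
  { rewrite (sumN_symmetrize n h), <- Rmult_assoc, Rinv_r, Rmult_1_l by lra.
    apply sumN_ext; intros; apply sumN_ext; intros; unfold h; ring. }
  unfold h. f_equal.
  rewrite (sumN_ext n _ (fun i => INR n * (u i * f i) - u i * sumN n f))
    by (intros; rewrite sumN_minus, sumN_const, sumN_scal; reflexivity).
  now rewrite sumN_minus, sumN_scal, sumN_scal_r.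
Qed.

Lemma sumN_sqr_diff_le n (a : nat -> R) :
  sumN n (fun i => sumN n (fun j => (a i - a j) ^ 2)) <= 2 * INR n * sumN n (fun i => a i ^ 2).
Proof.
  rewrite (sumN_ext n _ (fun i => sumN n (fun j => (a i - a j) * (a i - a j))))
    by (intros; apply sumN_ext; intros; ring).
  rewrite sumN_mul_diff.
  rewrite (sumN_ext n (fun i => a i * a i) (fun i => a i ^ 2)) by (intros; ring).
  pose proof (pow2_ge_0 (sumN n a)). nra.
Qed.

Lemma sumN_sqr_le n (a : nat -> R) : sumN n a ^ 2 <= INR n * sumN n (fun i => a i ^ 2).
Proof.
  assert (H : 0 <= sumN n (fun i => sumN n (fun j => (a i - a j) * (a i - a j))))
    by (apply sumN_nonneg; intros; apply sumN_nonneg; intros; apply Rle_0_sqr).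
  rewrite sumN_mul_diff in H.
  rewrite (sumN_ext n (fun i => a i ^ 2) (fun i => a i * a i)) by (intros; ring).
  nra.
Qed.

Lemma sumN_weighted_sqr_le n (w b : nat -> R) :
  (forall j, (j < n)%nat -> 0 <= w j <= 1) ->
  sumN n (fun j => w j * b j) ^ 2 <= INR n * sumN n (fun j => w j * b j ^ 2).
Proof.
  intros Hw. eapply Rle_trans; [apply sumN_sqr_le|].
  apply Rmult_le_compat_l; [apply pos_INR|].
  apply sumN_le; intros j Hj. destruct (Hw j Hj).
  assert (0 <= w j * (1 - w j) * b j ^ 2)
    by (apply Rmult_le_pos; [apply Rmult_le_pos; lra | apply pow2_ge_0]).
  replace ((w j * b j) ^ 2) with (w j * b j ^ 2 - w j * (1 - w j) * b j ^ 2) by ring.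
  lra.
Qed.

Lemma consensus_term_le w a b :
  0 <= w <= 1 -> w * ((a - b) * b) <= a ^ 2 - 3 / 4 * (w * b ^ 2).
Proof.
  intros [Hw0 Hw1].
  assert (0 <= w * (a - b / 2) ^ 2) by (apply Rmult_le_pos; [lra | apply pow2_ge_0]).
  assert (0 <= (1 - w) * a ^ 2) by (apply Rmult_le_pos; [lra | apply pow2_ge_0]).
  nra.
Qed.

Definition alignment n lam (w : nat -> nat -> R) (p : nat -> R) (i : nat) : R :=
  lam / INR n * sumN n (fun j => w i j * (p j - p i)).

Section Alignment.
Variables (n : nat) (lam : R) (w : nat -> nat -> R) (p : nat -> R).
Hypothesis n_pos : (0 < n)%nat.
Hypothesis w_sym : forall i j, (i < n)%nat -> (j < n)%nat -> w i j = w j i.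
Hypothesis w_bounds : forall i j, (i < n)%nat -> (j < n)%nat -> 0 <= w i j <= 1.

Lemma sumN_mul_alignment (u : nat -> R) :
  sumN n (fun i => u i * alignment n lam w p i) =
  lam / INR n * (/ 2 * sumN n (fun i => sumN n (fun j => w i j * ((u i - u j) * (p j - p i))))).
Proof.
  unfold alignment.
  rewrite (sumN_ext n _ (fun i => lam / INR n * sumN n (fun j => u i * (w i j * (p j - p i)))))
    by (intros; rewrite (sumN_scal n (u i)); ring).
  rewrite sumN_scal, sumN_symmetrize. do 2 f_equal.
  apply sumN_ext; intros i Hi; apply sumN_ext; intros j Hj.
  rewrite (w_sym j i) by auto. ring.
Qed.

Lemma sumN_alignment : sumN n (alignment n lam w p) = 0.
Proof.
  transitivity (sumN n (fun i => 1 * alignment n lam w p i)); [apply sumN_ext; intros; ring|].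
  rewrite sumN_mul_alignment.
  rewrite (sumN_ext n _ (fun _ => 0)), sumN_const; [ring|].
  intros. rewrite (sumN_ext n _ (fun _ => 0)), sumN_const; [ring|]. intros. ring.
Qed.

Lemma sumN_sqr_alignment_le :
  sumN n (fun i => alignment n lam w p i ^ 2) <=
  lam ^ 2 / INR n * sumN n (fun i => sumN n (fun j => w i j * (p j - p i) ^ 2)).
Proof.
  assert (Hn : 0 < INR n) by (apply lt_0_INR; lia).
  rewrite <- sumN_scal. apply sumN_le; intros i Hi. unfold alignment.
  rewrite Rpow_mult_distr.
  eapply Rle_trans.
  { apply Rmult_le_compat_l; [apply pow2_ge_0|].
    apply (sumN_weighted_sqr_le n (w i) (fun j => p j - p i)). auto. }
  right. field. lra.
Qed.

Lemma alignment_dissipation (u : nat -> R) :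
  0 <= lam ->
  sumN n (fun i => sumN n (fun j =>
    (u i - u j) * (alignment n lam w p i - alignment n lam w p j))) <=
  lam * (sumN n (fun i => sumN n (fun j => ((u i - p i) - (u j - p j)) ^ 2))
         - 3 / 4 * sumN n (fun i => sumN n (fun j => w i j * (p j - p i) ^ 2))).
Proof.
  intros Hlam. assert (Hn : INR n <> 0) by (apply not_0_INR; lia).
  rewrite sumN_mul_diff, sumN_alignment, sumN_mul_alignment.
  set (S := sumN n (fun i => sumN n (fun j => w i j * ((u i - u j) * (p j - p i))))).
  replace (2 * (INR n * (lam / INR n * (/ 2 * S)) - sumN n u * 0)) with (lam * S)
    by (field; auto).
  apply Rmult_le_compat_l; [lra|].
  rewrite <- sumN_scal, <- sumN_minus. apply sumN_le; intros i Hi.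
  rewrite <- sumN_scal, <- sumN_minus. apply sumN_le; intros j Hj.
  replace (u i - u j) with (((u i - p i) - (u j - p j)) - (p j - p i)) by ring.
  apply consensus_term_le; auto.
Qed.

End Alignment.

Lemma continuous_sumN n (g : nat -> R -> R) t :
  (forall m, (m < n)%nat -> continuous (g m) t) ->
  continuous (fun s => sumN n (fun m => g m s)) t.
Proof.
  induction n as [|n IH]; intros Hg; [exact (continuous_const 0 t)|].
  apply (continuous_ext (fun s => sumN n (fun m => g m s) + g n s));
    [intros; symmetry; apply sumN_S|].
  apply (continuous_plus (V := R_NormedModule)); [apply IH; auto | apply Hg; lia].
Qed.

Lemma is_derive_sumN n (g : nat -> R -> R) (g' : nat -> R) t :
  (forall m, (m < n)%nat -> is_derive (g m) t (g' m)) ->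
  is_derive (fun s => sumN n (fun m => g m s)) t (sumN n g').
Proof.
  induction n as [|n IH]; intros Hg; [exact (is_derive_const 0 t)|].
  rewrite sumN_S.
  apply (is_derive_ext (fun s => sumN n (fun m => g m s) + g n s));
    [intros; symmetry; apply sumN_S|].
  apply (is_derive_plus (V := R_NormedModule)); [apply IH; auto | apply Hg; lia].
Qed.

Lemma is_RInt_sumN n (g : nat -> R -> R) a b :
  (forall m, (m < n)%nat -> ex_RInt (g m) a b) ->
  is_RInt (fun s => sumN n (fun m => g m s)) a b (sumN n (fun m => RInt (g m) a b)).
Proof.
  induction n as [|n IH]; intros Hg.
  - pose proof (is_RInt_const (V := R_NormedModule) a b 0) as H.
    change (scal (b - a) 0) with ((b - a) * 0) in H. rewrite Rmult_0_r in H. exact H.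
  - rewrite sumN_S.
    apply (is_RInt_ext (fun s => sumN n (fun m => g m s) + g n s));
      [intros; symmetry; apply sumN_S|].
    apply (is_RInt_plus (V := R_NormedModule)); [apply IH; auto|].
    apply (RInt_correct (V := R_CompleteNormedModule)), Hg. lia.
Qed.

Lemma is_derive_sqr (f : R -> R) t l :
  is_derive f t l -> is_derive (fun s => f s ^ 2) t (2 * f t * l).
Proof.
  intros H. replace (2 * f t * l) with (INR 2 * l * f t ^ Nat.pred 2) by (simpl; ring).
  now apply is_derive_pow.
Qed.

Lemma continuous_sqr (f : R -> R) t : continuous f t -> continuous (fun s => f s ^ 2) t.
Proof.
  intros Hf. apply (continuous_ext (fun s => f s * f s)).
  - intros s. change (f s * f s = f s ^ 2). ring.
  - now apply (continuous_mult (K := R_AbsRing)).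
Qed.

Lemma ex_RInt_continuous_R (g : R -> R) a b : (forall s, continuous g s) -> ex_RInt g a b.
Proof. intros Hg. apply (ex_RInt_continuous (V := R_CompleteNormedModule)). auto. Qed.

(* Cauchy-Schwarz: expand [0 <= RInt (g - c)^2] with [c] the mean of [g]. *)
Lemma RInt_sqr_le (g : R -> R) a b :
  a < b -> (forall s, continuous g s) ->
  RInt g a b ^ 2 <= (b - a) * RInt (fun s => g s ^ 2) a b.
Proof.
  intros Hab Hg.
  set (I := RInt g a b). set (J := RInt (fun s => g s ^ 2) a b). set (c := I / (b - a)).
  assert (Hsqr : forall s, continuous (fun s => g s ^ 2) s) by (intros; apply continuous_sqr, Hg).
  assert (Hdev : is_RInt (fun s => (g s - c) ^ 2) a b (J - 2 * c * I + (b - a) * c ^ 2)).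
  { apply (is_RInt_ext (fun s => plus (minus (g s ^ 2) (scal (2 * c) (g s))) (c ^ 2))).
    { intros x _. change (g x ^ 2 - 2 * c * g x + c ^ 2 = (g x - c) ^ 2). ring. }
    apply (is_RInt_plus (V := R_NormedModule)); [apply (is_RInt_minus (V := R_NormedModule))|].
    - apply (RInt_correct (V := R_CompleteNormedModule)), ex_RInt_continuous_R, Hsqr.
    - apply (is_RInt_scal (V := R_NormedModule)),
        (RInt_correct (V := R_CompleteNormedModule)), ex_RInt_continuous_R, Hg.
    - apply (is_RInt_const (V := R_NormedModule)). }
  assert (H0 : 0 <= J - 2 * c * I + (b - a) * c ^ 2).
  { rewrite <- (is_RInt_unique _ _ _ _ Hdev).
    apply RInt_ge_0; [lra | eexists; exact Hdev | intros; apply pow2_ge_0]. }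
  replace (J - 2 * c * I + (b - a) * c ^ 2) with ((J * (b - a) - I ^ 2) / (b - a)) in H0
    by (unfold c; field; lra).
  assert (0 <= J * (b - a) - I ^ 2).
  { apply (Rmult_le_reg_r (/ (b - a))); [apply Rinv_0_lt_compat; lra|]. lra. }
  lra.
Qed.

Lemma continuous_clamp a (f : R -> R) t :
  continuous_on_from a f -> continuous (fun s => f (Rmax a s)) t.
Proof.
  intros Hf.
  apply (filterlim_comp _ _ _ (Rmax a) f _ (within (fun s => a <= s) (locally (Rmax a t)))).
  - intros P [eps HP]. exists eps. intros s Hs. apply HP; [|apply Rmax_l].
    change (Rabs (s - t) < eps) in Hs. change (Rabs (Rmax a s - Rmax a t) < eps).
    unfold Rmax. destruct (Rle_dec a s), (Rle_dec a t); split_Rabs; lra.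
  - apply Hf, Rmax_l.
Qed.

Lemma differentiable_on_nonneg_continuous (f : R -> R) :
  differentiable_on_nonneg f -> continuous_on_from 0 f.
Proof.
  intros Hdiff r Hr. destruct (Hdiff r Hr) as [l Hl].
  destruct (proj1 (filterlim_locally _ _) Hl (mkposreal 1 Rlt_0_1)) as [del Hdel].
  apply filterlim_locally. intros eps.
  set (M := Rabs l + 1).
  assert (HM : 0 < M) by (unfold M; pose proof (Rabs_pos l); lra).
  assert (Hrad : 0 < Rmin del (eps / M))
    by (apply Rmin_pos; [apply cond_pos | apply Rdiv_lt_0_compat; [apply cond_pos | lra]]).
  exists (mkposreal _ Hrad). intros s Hs Hs0. simpl in Hs.
  change (Rabs (s - r) < Rmin del (eps / M)) in Hs. change (Rabs (f s - f r) < eps).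
  destruct (Req_dec s r) as [->|Hsr]; [rewrite Rminus_diag, Rabs_R0; apply cond_pos|].
  assert (Hq : Rabs ((f s - f r) / (s - r) - l) < 1).
  { assert (Hball : Rabs (s - r - 0) < del)
      by (rewrite Rminus_0_r; eapply Rlt_le_trans; [exact Hs | apply Rmin_l]).
    specialize (Hdel (s - r) Hball). rewrite Rplus_minus in Hdel.
    apply Hdel. split; lra. }
  replace (f s - f r) with ((s - r) * ((f s - f r) / (s - r))) by (field; lra).
  rewrite Rabs_mult.
  apply Rle_lt_trans with (Rabs (s - r) * M).
  { apply Rmult_le_compat_l; [apply Rabs_pos|].
    pose proof (Rabs_triang_inv ((f s - f r) / (s - r)) l). unfold M. lra. }
  replace (pos eps) with (eps / M * M) by (field; lra).
  apply Rmult_lt_compat_r; [lra|]. eapply Rlt_le_trans; [exact Hs | apply Rmin_r].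
Qed.

Lemma is_derive_RInt_0 (g : R -> R) t :
  (forall s, continuous g s) -> is_derive (fun u => RInt g 0 u) t (g t).
Proof.
  intros Hg. apply (is_derive_RInt g _ 0 t); [|apply Hg].
  apply filter_forall. intros b.
  apply (RInt_correct (V := R_CompleteNormedModule)), ex_RInt_continuous_R, Hg.
Qed.

Lemma RInt_Chasles_0 (g : R -> R) a b :
  (forall s, continuous g s) -> RInt g a b = RInt g 0 b - RInt g 0 a.
Proof.
  intros Hg.
  rewrite <- (RInt_Chasles (V := R_CompleteNormedModule) g 0 a b)
    by apply ex_RInt_continuous_R, Hg.
  change (plus (RInt g 0 a) (RInt g a b)) with (RInt g 0 a + RInt g a b). lra.
Qed.

Lemma continuous_shift (f : R -> R) tau t :
  (forall s, continuous f s) -> continuous (fun s => f (s - tau)) t.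
Proof.
  intros Hf. apply (continuous_comp (fun s => s - tau)); [|apply Hf].
  apply (continuous_minus (V := R_NormedModule)); [apply continuous_id | apply continuous_const].
Qed.

Lemma is_derive_shift (f : R -> R) tau t l :
  is_derive f (t - tau) l -> is_derive (fun u => f (u - tau)) t l.
Proof.
  intros Hf.
  assert (Hlin : is_derive (fun u => u - tau) t (1 - 0)).
  { apply (is_derive_minus (V := R_NormedModule));
      [apply (is_derive_id (K := R_AbsRing)) | exact (is_derive_const tau t)]. }
  pose proof (is_derive_comp f (fun u => u - tau) t _ _ Hf Hlin) as H.
  change (scal (1 - 0) l) with ((1 - 0) * l) in H.
  now rewrite Rminus_0_r, Rmult_1_l in H.
Qed.

(* The double integral is [tau * P t - (Q t - Q (t - tau))] with [P' = g], [Q' = P]. *)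
Lemma is_derive_delay_integral (g : R -> R) tau t :
  (forall s, continuous g s) ->
  is_derive (fun u => RInt (fun th => RInt g th u) (u - tau) u) t
    (tau * g t - RInt g (t - tau) t).
Proof.
  intros Hg.
  set (P u := RInt g 0 u). set (Q u := RInt P 0 u).
  assert (HPc : forall s, continuous P s).
  { intros s. apply (ex_derive_continuous (V := R_NormedModule)).
    exists (g s). now apply is_derive_RInt_0. }
  assert (Hdouble : forall u, RInt (fun th => RInt g th u) (u - tau) u
                              = tau * P u - (Q u - Q (u - tau))).
  { intros u.
    rewrite (RInt_ext (V := R_CompleteNormedModule) _ (fun th => minus (P u) (P th)))
      by (intros th _; now apply RInt_Chasles_0).
    rewrite (RInt_minus (V := R_CompleteNormedModule)), RInt_const
      by (apply ex_RInt_continuous_R; intros; first [apply continuous_const | apply HPc]).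
    rewrite (RInt_Chasles_0 P) by apply HPc.
    change ((u - (u - tau)) * P u - (Q u - Q (u - tau)) = tau * P u - (Q u - Q (u - tau))).
    ring. }
  apply (is_derive_ext (fun u => tau * P u - (Q u - Q (u - tau)))); [intros; auto|].
  rewrite (RInt_Chasles_0 g) by apply Hg.
  apply (is_derive_minus (V := R_NormedModule));
    [apply is_derive_scal, is_derive_RInt_0, Hg|].
  apply (is_derive_minus (V := R_NormedModule));
    [|apply is_derive_shift]; apply is_derive_RInt_0, HPc.
Qed.

Lemma derive_nonpos_le (f f' : R -> R) a b :
  a <= b ->
  (forall s, a <= s <= b -> is_derive f s (f' s)) ->
  (forall s, a < s < b -> f' s <= 0) ->
  f b <= f a.
Proof.
  intros Hab Hd Hneg. destruct (Rle_lt_or_eq_dec a b Hab) as [Hlt | ->]; [|lra].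
  destruct (MVT_cor2 f f' a b Hlt) as [c [Hmvt Hc]].
  { intros c Hc. apply is_derive_Reals, Hd, Hc. }
  pose proof (Hneg c Hc). nra.
Qed.

Definition cs_weight d (psi : R -> R) (x : traj) t i j : R := psi (edist d x i j t).

Lemma cs_weight_sym d psi x t i j : cs_weight d psi x t i j = cs_weight d psi x t j i.
Proof. unfold cs_weight, edist, dist2. do 2 f_equal. apply sumN_ext. intros. ring. Qed.

Lemma Dfun_coord N d psi (x v : traj) t :
  Dfun N d psi x v t = / 2 * sumN d (fun k => sumN N (fun i => sumN N (fun j =>
    cs_weight d psi x t i j * (v j k t - v i k t) ^ 2))).
Proof.
  unfold Dfun, dist2, cs_weight. f_equal. rewrite <- sumN_swap3.
  apply sumN_ext; intros; apply sumN_ext; intros. symmetry. apply sumN_scal.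
Qed.

Section Weights.
Variables (N d : nat) (lam : R) (psi : R -> R) (x v : traj) (t : R).
Hypothesis psi_bounds : forall r, 0 <= r -> 0 <= psi r <= 1.

Lemma cs_weight_bounds i j : 0 <= cs_weight d psi x t i j <= 1.
Proof. apply psi_bounds, sqrt_pos. Qed.

Lemma Dfun_nonneg : 0 <= Dfun N d psi x v t.
Proof.
  rewrite Dfun_coord. apply Rmult_le_pos; [lra|].
  do 3 (apply sumN_nonneg; intros).
  apply Rmult_le_pos; [apply cs_weight_bounds | apply pow2_ge_0].
Qed.

Lemma sumN_sqr_alignment_le_Dfun :
  (0 < N)%nat ->
  sumN d (fun k => sumN N (fun i =>
    alignment N lam (cs_weight d psi x t) (fun j => v j k t) i ^ 2)) <=
  2 * lam ^ 2 / INR N * Dfun N d psi x v t.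
Proof.
  intros HN. rewrite Dfun_coord.
  replace (2 * lam ^ 2 / INR N * (/ 2 * _)) with
    (sumN d (fun k => lam ^ 2 / INR N * sumN N (fun i => sumN N (fun j =>
       cs_weight d psi x t i j * (v j k t - v i k t) ^ 2))))
    by (rewrite sumN_scal; field; apply not_0_INR; lia).
  apply sumN_le; intros k Hk.
  apply sumN_sqr_alignment_le; auto. intros. apply cs_weight_bounds.
Qed.

End Weights.

Lemma is_derive_Vfun N d (v : traj) (v' : nat -> nat -> R) t :
  (forall i k, (i < N)%nat -> (k < d)%nat -> is_derive (v i k) t (v' i k)) ->
  is_derive (Vfun N d v) t
    (sumN d (fun k => sumN N (fun i => sumN N (fun j =>
       (v i k t - v j k t) * (v' i k - v' j k))))).
Proof.
  intros Hv. rewrite <- sumN_swap3.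
  replace (sumN N _) with (/ 2 * sumN N (fun i => sumN N (fun j => sumN d (fun k =>
     2 * (v i k t - v j k t) * (v' i k - v' j k)))))
    by (rewrite <- sumN_scal; apply sumN_ext; intros; rewrite <- sumN_scal;
        apply sumN_ext; intros; rewrite <- sumN_scal; apply sumN_ext; intros; field).
  apply is_derive_scal. unfold dist2.
  do 3 (apply is_derive_sumN; intros).
  apply (is_derive_sqr (fun s => v _ _ s - v _ _ s)).
  apply (is_derive_minus (V := R_NormedModule)); auto.
Qed.

Section Continuity.
Variables (N d : nat) (lam : R) (psi : R -> R) (x v : traj) (t : R).
Hypothesis psi_cont : continuous_on_from 0 psi.
Hypothesis x_cont : forall i k, (i < N)%nat -> (k < d)%nat -> continuous (x i k) t.
Hypothesis v_cont : forall i k, (i < N)%nat -> (k < d)%nat -> continuous (v i k) t.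

Lemma continuous_dist2 (y : traj) i j :
  (forall i k, (i < N)%nat -> (k < d)%nat -> continuous (y i k) t) ->
  (i < N)%nat -> (j < N)%nat -> continuous (dist2 d y i j) t.
Proof.
  intros Hy Hi Hj. apply continuous_sumN; intros k Hk.
  apply continuous_sqr, (continuous_minus (V := R_NormedModule)); auto.
Qed.

Lemma continuous_cs_weight i j :
  (i < N)%nat -> (j < N)%nat -> continuous (fun s => cs_weight d psi x s i j) t.
Proof.
  intros Hi Hj. unfold cs_weight, edist.
  apply (continuous_ext (fun s => psi (Rmax 0 (sqrt (dist2 d x i j s)))));
    [intros; rewrite Rmax_right by apply sqrt_pos; reflexivity|].
  apply (continuous_comp (fun s => sqrt (dist2 d x i j s)) (fun r => psi (Rmax 0 r))).
  - apply continuous_sqrt_comp, continuous_dist2; auto.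
  - now apply continuous_clamp.
Qed.

Lemma continuous_Dfun : continuous (Dfun N d psi x v) t.
Proof.
  unfold Dfun. apply (continuous_mult (K := R_AbsRing)); [apply continuous_const|].
  apply continuous_sumN; intros i Hi; apply continuous_sumN; intros j Hj.
  apply (continuous_mult (K := R_AbsRing));
    [apply continuous_cs_weight | apply continuous_dist2]; auto.
Qed.

Lemma continuous_alignment i k :
  (i < N)%nat -> (k < d)%nat ->
  continuous (fun s => alignment N lam (cs_weight d psi x s) (fun j => v j k s) i) t.
Proof.
  intros Hi Hk. unfold alignment.
  apply (continuous_mult (K := R_AbsRing)); [apply continuous_const|].
  apply continuous_sumN; intros j Hj.
  apply (continuous_mult (K := R_AbsRing));
    [apply continuous_cs_weight | apply (continuous_minus (V := R_NormedModule))]; auto.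
Qed.

End Continuity.

Definition clamp (a : R) (y : traj) : traj := fun i k s => y i k (Rmax a s).

Section Lyapunov.
Variables (N d : nat) (lam tau : R) (psi : R -> R) (x v : traj).
Hypothesis N_pos : (0 < N)%nat.
Hypothesis lam_pos : 0 < lam.
Hypothesis tau_pos : 0 < tau.
Hypothesis lam_tau : lam * tau <= / 2.
Hypothesis psi_bounds : forall r, 0 <= r -> 0 <= psi r <= 1.
Hypothesis psi_cont : continuous_on_from 0 psi.
Hypothesis xv_cont : forall i k, (i < N)%nat -> (k < d)%nat ->
  continuous_on_from (- tau) (x i k) /\ continuous_on_from (- tau) (v i k).
Hypothesis v_derive : forall i k t, (i < N)%nat -> (k < d)%nat -> 0 < t ->
  is_derive (v i k) t
    (alignment N lam (cs_weight d psi x (t - tau)) (fun j => v j k (t - tau)) i).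

(* Delayed time clamped to the history interval: it is [t - tau] on [0, oo), and the
   delayed quantities built from it are continuous on all of R. *)
Definition delayed t := Rmax (- tau) (t - tau).

Definition Ddelay t := Dfun N d psi x v (delayed t).

Definition force i k t :=
  alignment N lam (cs_weight d psi x (delayed t)) (fun j => v j k (delayed t)) i.

Definition Vdot t := sumN d (fun k => sumN N (fun i => sumN N (fun j =>
  (v i k t - v j k t) * (force i k t - force j k t)))).

Definition Lyap t :=
  Vfun N d v t + 4 * tau * lam ^ 3 * RInt (fun th => RInt Ddelay th t) (t - tau) t.

Definition Lyap_rate t :=
  Vdot t + 4 * tau * lam ^ 3 * (tau * Ddelay t - RInt Ddelay (t - tau) t).

Lemma delayed_eq t : 0 <= t -> delayed t = t - tau.
Proof. intros Ht. apply Rmax_right. lra. Qed.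

Lemma continuous_clamped_state s :
  (forall i k, (i < N)%nat -> (k < d)%nat -> continuous (clamp (- tau) x i k) s) /\
  (forall i k, (i < N)%nat -> (k < d)%nat -> continuous (clamp (- tau) v i k) s).
Proof. split; intros; apply continuous_clamp, xv_cont; auto. Qed.

Lemma continuous_Ddelay t : continuous Ddelay t.
Proof.
  change (continuous (fun s => Dfun N d psi (clamp (- tau) x) (clamp (- tau) v) (s - tau)) t).
  apply continuous_shift. intros s.
  apply continuous_Dfun; auto; apply continuous_clamped_state.
Qed.

Lemma continuous_force i k t : (i < N)%nat -> (k < d)%nat -> continuous (force i k) t.
Proof.
  intros Hi Hk.
  apply (continuous_shift (fun u => alignment N lam (cs_weight d psi (clamp (- tau) x) u)
                                      (fun j => clamp (- tau) v j k u) i)).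
  intros s.
  apply continuous_alignment; auto; apply continuous_clamped_state.
Qed.

Lemma is_derive_force i k t :
  (i < N)%nat -> (k < d)%nat -> 0 < t -> is_derive (v i k) t (force i k t).
Proof. intros. unfold force. rewrite delayed_eq by lra. auto. Qed.

Lemma increment_RInt i k t :
  (i < N)%nat -> (k < d)%nat -> tau < t ->
  v i k t - v i k (t - tau) = RInt (force i k) (t - tau) t.
Proof.
  intros Hi Hk Ht. symmetry. apply is_RInt_unique.
  apply (is_RInt_derive (V := R_CompleteNormedModule));
    intros s Hs; rewrite Rmin_left, Rmax_right in Hs by lra.
  - apply is_derive_force; auto. lra.
  - now apply continuous_force.
Qed.

Lemma sumN_RInt_sqr_force_le t :
  sumN d (fun k => sumN N (fun i => RInt (fun s => force i k s ^ 2) (t - tau) t)) <=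
  2 * lam ^ 2 / INR N * RInt Ddelay (t - tau) t.
Proof.
  assert (Hc : forall i k s, (i < N)%nat -> (k < d)%nat -> continuous (fun s => force i k s ^ 2) s)
    by (intros; apply continuous_sqr, continuous_force; auto).
  set (F s := sumN d (fun k => sumN N (fun i => force i k s ^ 2))).
  assert (HF : is_RInt F (t - tau) t
                 (sumN d (fun k => sumN N (fun i => RInt (fun s => force i k s ^ 2) (t - tau) t)))).
  { unfold F.
    rewrite (sumN_ext d _ (fun k => RInt (fun s => sumN N (fun i => force i k s ^ 2)) (t - tau) t)).
    - apply is_RInt_sumN; intros k Hk.
      apply ex_RInt_continuous_R; intros; apply continuous_sumN; auto.
    - intros k Hk. symmetry. apply is_RInt_unique, is_RInt_sumN.
      intros; apply ex_RInt_continuous_R; auto. }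
  rewrite <- (is_RInt_unique _ _ _ _ HF).
  apply Rle_trans with (RInt (fun s => 2 * lam ^ 2 / INR N * Ddelay s) (t - tau) t).
  - apply RInt_le; [lra | eexists; exact HF | |].
    + apply ex_RInt_continuous_R. intros.
      apply (continuous_mult (K := R_AbsRing)); [apply continuous_const | apply continuous_Ddelay].
    + intros. apply sumN_sqr_alignment_le_Dfun; auto.
  - right. apply (RInt_scal (V := R_CompleteNormedModule)), ex_RInt_continuous_R, continuous_Ddelay.
Qed.

Lemma sumN_sqr_increment_le t :
  tau < t ->
  sumN d (fun k => sumN N (fun i => sumN N (fun j =>
    ((v i k t - v i k (t - tau)) - (v j k t - v j k (t - tau))) ^ 2))) <=
  4 * tau * lam ^ 2 * RInt Ddelay (t - tau) t.
Proof.
  intros Ht. assert (HN : 0 < INR N) by (apply lt_0_INR; lia).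
  apply Rle_trans with (2 * INR N * sumN d (fun k => sumN N (fun i =>
                          (v i k t - v i k (t - tau)) ^ 2))).
  { rewrite <- sumN_scal. apply sumN_le; intros k Hk.
    apply (sumN_sqr_diff_le N (fun i => v i k t - v i k (t - tau))). }
  apply Rle_trans with (2 * INR N * (tau * sumN d (fun k => sumN N (fun i =>
                          RInt (fun s => force i k s ^ 2) (t - tau) t)))).
  { apply Rmult_le_compat_l; [lra|].
    rewrite <- sumN_scal. apply sumN_le; intros k Hk.
    rewrite <- sumN_scal. apply sumN_le; intros i Hi.
    rewrite increment_RInt by auto.
    eapply Rle_trans; [apply RInt_sqr_le; [lra | intros; apply continuous_force; auto]|].
    right. f_equal. ring. }
  apply Rle_trans with (2 * INR N * (tau * (2 * lam ^ 2 / INR N * RInt Ddelay (t - tau) t))).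
  { apply Rmult_le_compat_l; [lra|]. apply Rmult_le_compat_l; [lra|].
    apply sumN_RInt_sqr_force_le. }
  right. field. lra.
Qed.

Lemma Vdot_le t :
  0 <= t ->
  Vdot t <= lam * sumN d (fun k => sumN N (fun i => sumN N (fun j =>
              ((v i k t - v i k (t - tau)) - (v j k t - v j k (t - tau))) ^ 2)))
            - 3 / 2 * lam * Ddelay t.
Proof.
  intros Ht. unfold Vdot, force, Ddelay. rewrite delayed_eq, Dfun_coord by lra.
  eapply Rle_trans.
  { apply sumN_le; intros k Hk.
    apply (alignment_dissipation N lam (cs_weight d psi x (t - tau)) (fun j => v j k (t - tau)));
      [auto | intros; apply cs_weight_sym | intros; apply cs_weight_bounds; auto | lra]. }
  right. rewrite sumN_scal, sumN_minus, sumN_scal. field.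
Qed.

Lemma Lfun_eq t : tau <= t -> Lfun N d lam tau psi x v t = Lyap t.
Proof.
  intros Ht. unfold Lfun, Lyap. do 2 f_equal.
  apply (RInt_ext (V := R_CompleteNormedModule)); intros th Hth.
  rewrite Rmin_left, Rmax_right in Hth by lra.
  apply (RInt_ext (V := R_CompleteNormedModule)); intros s Hs.
  rewrite Rmin_left, Rmax_right in Hs by lra.
  unfold Ddelay. now rewrite delayed_eq by lra.
Qed.

Lemma is_derive_Lyap t : 0 < t -> is_derive Lyap t (Lyap_rate t).
Proof.
  intros Ht. apply (is_derive_plus (V := R_NormedModule)).
  - apply is_derive_Vfun. intros. now apply is_derive_force.
  - apply is_derive_scal, is_derive_delay_integral, continuous_Ddelay.
Qed.

Lemma Lyap_rate_nonpos t : tau < t -> Lyap_rate t <= 0.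
Proof.
  intros Ht. unfold Lyap_rate.
  pose proof (Vdot_le t ltac:(lra)) as HV.
  pose proof (sumN_sqr_increment_le t Ht) as HS.
  pose proof (Dfun_nonneg N d psi x v (delayed t) psi_bounds) as HD. fold (Ddelay t) in HD.
  set (D := Ddelay t) in *. set (I := RInt Ddelay (t - tau) t) in *.
  pose proof (Rmult_le_compat_l lam _ _ (Rlt_le _ _ lam_pos) HS) as HlamS.
  assert (HlamD : 0 <= lam * D) by (apply Rmult_le_pos; lra).
  assert (Hdelay : 4 * (lam * tau) ^ 2 <= 1).
  { pose proof (Rmult_lt_0_compat _ _ lam_pos tau_pos). nra. }
  assert (4 * (lam * tau) ^ 2 * (lam * D) <= 1 * (lam * D))
    by (apply Rmult_le_compat_r; lra).
  nra.
Qed.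

Lemma Lyap_nonincreasing t : tau <= t -> Lyap t <= Lyap tau.
Proof.
  intros Ht. apply (derive_nonpos_le Lyap Lyap_rate tau t Ht).
  - intros s Hs. apply is_derive_Lyap. lra.
  - intros s Hs. apply Lyap_rate_nonpos. lra.
Qed.

End Lyapunov.

Theorem lemma3p2 (N d : nat) (lam tau : R) (psi : R -> R) (x v : traj) :
  (1 <= N)%nat -> (1 <= d)%nat ->
  0 < lam -> 0 < tau -> lam * tau <= / 2 ->
  (* psi : [0,oo) -> (0,oo) positive, nonincreasing, differentiable, psi <= 1 *)
  (forall r, 0 <= r -> 0 < psi r) ->
  (forall r s, 0 <= r -> r <= s -> psi s <= psi r) ->
  differentiable_on_nonneg psi ->
  (forall r, 0 <= r -> psi r <= 1) ->
  (* initial data on [-tau, 0] : in C([-tau,0]) and C^1((-tau,0)) *)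
  (forall i k, (i < N)%nat -> (k < d)%nat ->
     continuous_on_cc (- tau) 0 (x i k) /\ continuous_on_cc (- tau) 0 (v i k) /\
     C1_on_oo (- tau) 0 (x i k) /\ C1_on_oo (- tau) 0 (v i k)) ->
  (* the solution is continuous on [-tau, oo) *)
  (forall i k, (i < N)%nat -> (k < d)%nat ->
     continuous_on_from (- tau) (x i k) /\ continuous_on_from (- tau) (v i k)) ->
  (* the delayed Cucker-Smale system for t > 0 *)
  (forall i k t, (i < N)%nat -> (k < d)%nat -> 0 < t ->
     is_derive (x i k) t (v i k t) /\
     is_derive (v i k) t
       (lam / INR N * sumN N (fun j =>
          psi (edist d x i j (t - tau)) * (v j k (t - tau) - v i k (t - tau))))) ->
  forall t, tau <= t -> Lfun N d lam tau psi x v t <= Lfun N d lam tau psi x v tau.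
Proof.
  intros HN _ Hlam Htau Hlt Hpos _ Hdiff Hle1 _ Hcont Hode t Ht.
  assert (Hpsi : forall r, 0 <= r -> 0 <= psi r <= 1)
    by (intros r Hr; split; [apply Rlt_le, Hpos | apply Hle1]; exact Hr).
  rewrite !(Lfun_eq N d lam tau psi x v Htau) by lra.
  apply Lyap_nonincreasing; auto.
  - now apply differentiable_on_nonneg_continuous.
  - intros i k s Hi Hk Hs. apply (Hode i k s Hi Hk Hs).
Qed.
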